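(* Let $q$ be a prime power, $7\le n\le q$, $\alpha_1,\dots,\alpha_n\in\mathbb{F}_q$ distinct, $u_1,\dots,u_n\in\mathbb{F}_q^*$, and $H\in\mathbb{F}_q^{6\times n}$ with $H_{ab}=u_b\alpha_b^{a-1}$ (so $\ker H$ has distance $7$). Then the number of $e\in\mathbb{F}_q^n$ with $|e|=4$ for which there exists $e'\in\mathbb{F}_q^n$ with $|e'|\le 3$ and $He'=He$ is at most $$\frac{(n-4)(n-5)(n-6)}{6(q-1)^3}\cdot(q-1)^4\binom{n}{4}.$$
   Context: $|e|$ denotes the Hamming weight of $e\in\mathbb{F}_q^n$. *)

From mathcomp Require Import all_boot all_order all_algebra all_field.
Set Implicit Arguments. Unset Strict Implicit. Unset Printing Implicit Defensive.
Import GRing.Theory.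
Local Open Scope ring_scope.

Definition hwt (F : finFieldType) (n : nat) (e : 'cV[F]_n) : nat :=
  #|[set i : 'I_n | e i 0 != 0]|.

(* Generalized Reed-Solomon parity-check matrix H_{ab} = u_b alpha_b^(a-1),
   with rows indexed a = 1..6, i.e. 'I_6 index a' = a-1. *)
Definition grs_H (F : finFieldType) (n : nat) (alpha u : 'I_n -> F) : 'M[F]_(6, n) :=
  \matrix_(a < 6, b < n) (u b * alpha b ^+ a).

Definition num_bad (F : finFieldType) (n : nat) (H : 'M[F]_(6, n)) : nat :=
  #|[set e : 'cV[F]_n | (hwt e == 4)%N &&
       [exists e' : 'cV[F]_n, (hwt e' <= 3)%N && (H *m e' == H *m e)]]|.

From mathcomp Require Import all_boot all_order all_algebra all_field.
From mathcomp Require Import ring zify.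
Import GRing.Theory Num.Theory.
Set Implicit Arguments.
Unset Strict Implicit.
Unset Printing Implicit Defensive.
Local Open Scope ring_scope.

(* Every nonzero kernel vector of the GRS matrix with k rows has weight > k:
   otherwise the polynomial of degree < k vanishing at all but one point of its
   support contradicts the k parity checks.  So if e of weight 4 and e' of
   weight <= 3 have the same syndrome, e - e' has weight >= 7, which forces
   supp e' to consist of 3 positions outside supp e.  The map
   e |-> (supp e, supp e', e_i), for a chosen i in supp e, is injective on such
   e: two vectors with the same image differ, after subtracting their twins, by
   a kernel vector supported on the 6 positions (supp e \ {i}) u supp e'.
   There are C(n,4) C(n-4,3) (q-1) possible images. *)

Definition supp {F : finFieldType} {n : nat} (e : 'cV[F]_n) : {set 'I_n} :=
  [set i | e i 0 != 0].

Section Support.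
Variables (F : finFieldType) (n : nat).
Implicit Types (a b c : 'cV[F]_n) (A : {set 'I_n}).

Lemma hwtE c : hwt c = #|supp c|. Proof. by []. Qed.

Lemma supp_eq0 c : supp c = set0 -> c = 0.
Proof.
move=> c0; apply/matrixP => i j; rewrite (ord1 j) !mxE.
apply/eqP; apply: contraT => nz; have : i \in supp c by rewrite inE.
by rewrite c0 inE.
Qed.

Lemma suppB a b : supp (a - b) \subset supp a :|: supp b.
Proof.
apply/subsetP => i; rewrite !inE !mxE; apply: contraR.
by rewrite negb_or !negbK => /andP[/eqP -> /eqP ->]; rewrite subrr.
Qed.

Lemma suppB_eqD1 A a b i : supp a \subset A -> supp b \subset A ->
  a i 0 = b i 0 -> supp (a - b) \subset A :\ i.
Proof.
move=> sa sb ab; apply/subsetP => j jab; rewrite in_setD1.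
apply/andP; split.
  by apply: contraTneq jab => ->; rewrite inE !mxE ab subrr eqxx.
have sabA : supp (a - b) \subset A.
  by apply: subset_trans (suppB a b) _; rewrite subUset sa sb.
exact: (subsetP sabA).
Qed.

End Support.

Definition grs_mx (F : finFieldType) (k n : nat) (alpha u : 'I_n -> F) :
    'M[F]_(k, n) :=
  \matrix_(a < k, b < n) (u b * alpha b ^+ a).

Lemma grs_HE (F : finFieldType) (n : nat) (alpha u : 'I_n -> F) :
  grs_H alpha u = grs_mx 6 alpha u.
Proof. by []. Qed.

Section GRSDistance.
Variables (F : finFieldType) (k n : nat) (alpha u : 'I_n -> F).
Hypothesis alpha_inj : injective alpha.
Hypothesis u_neq0 : forall i, u i != 0.

Lemma grs_kernel_sum_horner (c : 'cV[F]_n) (p : {poly F}) :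
  grs_mx k alpha u *m c = 0 -> (size p <= k)%N ->
  \sum_j u j * c j 0 * p.[alpha j] = 0.
Proof.
move=> Hc sp.
have row_eq0 (a : 'I_k) : \sum_j u j * alpha j ^+ a * c j 0 = 0.
  transitivity ((grs_mx k alpha u *m c) a 0); last by rewrite Hc mxE.
  by rewrite mxE; apply: eq_bigr => j _; rewrite mxE.
transitivity (\sum_j \sum_(a < k) p`_a * (u j * alpha j ^+ a * c j 0)).
  apply: eq_bigr => j _; rewrite (horner_coef_wide _ sp) mulr_sumr.
  by apply: eq_bigr => a _; ring.
by rewrite exchange_big big1 // => a _; rewrite -mulr_sumr row_eq0 mulr0.
Qed.

Lemma grs_mx_kernel_eq0 (c : 'cV[F]_n) :
  grs_mx k alpha u *m c = 0 -> (hwt c <= k)%N -> c = 0.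
Proof.
move=> Hc wc; apply: supp_eq0; apply/eqP; apply: contraT => /set0Pn[i ci].
set S := supp c :\ i.
set p := \prod_(x <- map alpha (enum S)) ('X - x%:P).
have p_root j : root p (alpha j) = (j \in S).
  by rewrite root_prod_XsubC (mem_map alpha_inj) mem_enum.
have sp : (size p <= k)%N.
  rewrite size_prod_XsubC size_map -cardE; apply: leq_trans wc.
  by rewrite hwtE (cardsD1 i (supp c)) ci.
have nz : u i * c i 0 * p.[alpha i] != 0.
  rewrite !mulf_neq0 ?u_neq0 //; first by rewrite inE in ci.
  by move: (p_root i); rewrite /root => ->; rewrite !inE eqxx.
case/negP: nz; apply/eqP.
rewrite -(grs_kernel_sum_horner Hc sp) (bigD1 i) //= big1 ?addr0 // => j ji.
have [-> | cj] := eqVneq (c j 0) 0; first by rewrite mulr0 mul0r.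
have /rootP -> : root p (alpha j) by rewrite p_root !inE ji cj.
by rewrite mulr0.
Qed.

End GRSDistance.

Section Confusable.
Variables (F : finFieldType) (m n : nat) (H : 'M[F]_(m, n)) (t s : nat).
Hypothesis s_lt_t : (s < t)%N.
Hypothesis kerH_wt :
  forall c : 'cV[F]_n, H *m c = 0 -> (hwt c < t + s)%N -> c = 0.
Implicit Types e : 'cV[F]_n.

Definition confusable := [set e : 'cV[F]_n | (hwt e == t) &&
  [exists e' : 'cV[F]_n, (hwt e' <= s)%N && (H *m e' == H *m e)]].

Lemma twin_supp_disjoint e e' :
  hwt e = t -> (hwt e' <= s)%N -> H *m e' = H *m e ->
  supp e' \subset ~: supp e /\ hwt e' = s.
Proof.
move=> we we' He'.
have Hc : H *m (e - e') = 0 by rewrite mulmxBr He' subrr.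
have c_neq0 : e - e' != 0.
  by rewrite subr_eq0; apply: contraTneq we' => <-; rewrite -ltnNge we.
have wc : (t + s <= hwt (e - e'))%N.
  by rewrite leqNgt; apply: contra c_neq0 => /(kerH_wt Hc) ->.
have := leq_trans wc (subset_leq_card (suppB e e')).
rewrite cardsU -!hwtE we => wU.
have I0 : #|supp e :&: supp e'| = 0%N by lia.
split; last by lia.
by rewrite -disjoints_subset -setI_eq0 setIC -cards_eq0 I0.
Qed.

Definition twin e := [pick e' | (hwt e' <= s)%N && (H *m e' == H *m e)].

Definition signature e :=
  (supp e, oapp supp set0 (twin e), oapp (fun i => e i 0) 0 [pick i in supp e]).

Lemma confusable_twin e : e \in confusable ->
  exists e',
    [/\ twin e = Some e', hwt e = t, (hwt e' <= s)%N & H *m e' = H *m e].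
Proof.
rewrite inE => /andP[/eqP we /existsP[e0 He0]]; rewrite /twin.
case: pickP => [e' /andP[we' /eqP He'] | /(_ e0)]; last by rewrite He0.
by exists e'.
Qed.

Lemma pick_supp_some e :
  hwt e = t -> exists2 i, i \in supp e & [pick i in supp e] = Some i.
Proof.
move=> we; case: pickP => [i ie | supp0]; first by exists i.
by move: s_lt_t; rewrite -we hwtE (eq_card0 supp0).
Qed.

Lemma signature_inj : {in confusable &, injective signature}.
Proof.
move=> e1 e2 C1 C2 [S12 R12 X12].
have [e1' [tw1 w1 w1' He1]] := confusable_twin C1.
have [e2' [tw2 _ _ He2]] := confusable_twin C2.
rewrite tw1 tw2 /= in R12.
have [i ie1 pick_i] := pick_supp_some w1.
rewrite -S12 pick_i /= in X12.
have [R1 wR1] := twin_supp_disjoint w1 w1' He1.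
have s12 : supp (e1 - e2) \subset supp e1 :\ i.
  by apply: suppB_eqD1; rewrite ?S12.
have s12' : supp (e1' - e2') \subset supp e1'.
  by apply: subset_trans (suppB _ _) _; rewrite -R12 setUid.
have E : e1 - e2 = e1' - e2'.
  apply/eqP; rewrite -subr_eq0; apply/eqP/kerH_wt.
    by rewrite !mulmxBr He1 He2 subrr.
  have := cardsD1 i (supp e1); rewrite ie1 add1n -hwtE w1 => tD.
  have := subset_leq_card (subset_trans (suppB _ _) (setUSS s12 s12')).
  rewrite cardsU -!hwtE wR1 tD addSn ltnS => dU.
  exact: leq_trans dU (leq_subr _ _).
apply/eqP; rewrite -subr_eq0; apply/eqP/supp_eq0/eqP.
rewrite -subset0 -(setICr (supp e1)) subsetI.
rewrite (subset_trans s12 (subD1set _ _)) /=.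
by rewrite E (subset_trans s12' R1).
Qed.

Definition twin_supports (TR : {set 'I_n} * {set 'I_n}) :=
  [&& #|TR.1| == t, TR.2 \subset ~: TR.1 & #|TR.2| == s].

Definition signatures :=
  [set p : {set 'I_n} * {set 'I_n} * F | twin_supports p.1 && (p.2 != 0)].

Lemma signature_subset : signature @: confusable \subset signatures.
Proof.
apply/subsetP => _ /imsetP[e Ce ->].
have [e' [tw we we' He]] := confusable_twin Ce.
have [R1 wR] := twin_supp_disjoint we we' He.
have [i ie pick_i] := pick_supp_some we.
rewrite inE /twin_supports /signature tw pick_i /= -!hwtE we wR R1 !eqxx /=.
by rewrite inE in ie.
Qed.

Lemma card_signatures : #|signatures| = ('C(n, t) * 'C(n - t, s) * #|F|.-1)%N.
Proof.
have card_nz : #|[set x : F | x != 0]| = #|F|.-1.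
  by rewrite -(cardsC1 (0 : F)); apply: eq_card => x; rewrite !inE.
have cardC (T : {set 'I_n}) : #|~: T| = (n - #|T|)%N.
  by rewrite -(addKn #|T| #|~: T|) cardsC card_ord.
rewrite -sum1_card; under eq_bigl do rewrite inE.
rewrite -(pair_big_dep twin_supports (fun _ x => x != 0) (fun _ _ => 1%N)) /=.
under eq_bigr do rewrite sum1dep_card card_nz.
rewrite -(pair_big_dep (fun T : {set 'I_n} => #|T| == t)
  (fun T (R : {set 'I_n}) => (R \subset ~: T) && (#|R| == s))
  (fun _ _ => #|F|.-1)) /=.
under eq_bigr => T /eqP T_t do rewrite sum_nat_cond_const cards_draws cardC T_t.
by rewrite sum_nat_cond_const card_draws card_ord mulnA.
Qed.

Lemma card_confusable : (#|confusable| <= 'C(n, t) * 'C(n - t, s) * #|F|.-1)%N.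
Proof.
rewrite -card_signatures -(card_in_imset signature_inj).
exact: subset_leq_card signature_subset.
Qed.

End Confusable.

Lemma bin3_ffact m : ('C(m, 3) * 3`! = m * (m - 1) * (m - 2))%N.
Proof. by rewrite bin_ffact !ffactnS ffactn0 muln1 mulnA -!subn1 -subnDA. Qed.

Theorem mainTheorem12 (F : finFieldType) (n : nat) (alpha u : 'I_n -> F) :
  (7 <= n)%N -> (n <= #|F|)%N ->
  injective alpha -> (forall i, u i != 0) ->
  (num_bad (grs_H alpha u))%:R <=
    ((n - 4) * (n - 5) * (n - 6))%:R / (6 * (#|F| - 1) ^ 3)%:R
      * ((#|F| - 1) ^ 4 * 'C(n, 4))%:R :> rat.
Proof.
move=> n_ge7 n_le_q alpha_inj u_neq0.
have kerH (c : 'cV[F]_n) : grs_H alpha u *m c = 0 -> (hwt c < 4 + 3)%N -> c = 0.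
  by rewrite grs_HE => Hc; exact: grs_mx_kernel_eq0 alpha_inj u_neq0 c Hc.
have bad_le :
    (num_bad (grs_H alpha u) <= 'C(n, 4) * 'C(n - 4, 3) * #|F|.-1)%N.
  exact: card_confusable (isT : (3 < 4)%N) kerH.
have q1_neq0 : ((#|F| - 1)%:R : rat) != 0 by rewrite pnatr_eq0; lia.
have -> : ((n - 4) * (n - 5) * (n - 6) = 'C(n - 4, 3) * 3`!)%N.
  by rewrite bin3_ffact -!subnDA.
rewrite [X in _ <= X](_ : _ = ('C(n, 4) * 'C(n - 4, 3) * (#|F| - 1))%:R).
  by rewrite ler_nat subn1 bad_le.
by rewrite !natrM; field.
Qed.
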